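(* Let $\varphi_1,\dots,\varphi_t$ be finitely many inertial endomorphisms of an abelian group $A$ of finite torsion-free rank, let $T$ be the torsion subgroup of $A$, suppose each $\varphi_i$ induces on $A/T$ multiplication by $\frac{m_i}{n_i}$ with $m_i,n_i$ coprime integers, and let $\pi=\pi(n_1\cdots n_t)$. Then there is a $\mathbb{Z}[\varphi_1,\dots,\varphi_t]$-submodule $V$ of $A$ with $V\cong\mathbb{Q}^\pi\oplus\dots\oplus\mathbb{Q}^\pi$ ($r$ summands, for some $r\in\mathbb{N}$) such that $A/V$ is periodic.
   Context: Abelian groups are written additively. An endomorphism $\varphi$ of $A$ is inertial if $(\varphi(X)+X)/X$ is finite for every subgroup $X\le A$. A $\mathbb{Z}[\varphi_1,\dots,\varphi_t]$-submodule is a subgroup invariant under every $\varphi_i$. For the torsion-free group $A/T$, ''$\varphi_i$ induces multiplication by $\frac{m_i}{n_i}$'' means $n_i\bar\varphi_i(x)=m_ix$ for all $x\in A/T$. $\pi(n)$ is the set of prime divisors of $n$ and $\mathbb{Q}^\pi$ is the ring of rationals whose denominators are products of primes in $\pi$. *)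

From mathcomp Require Import all_boot all_order all_algebra.
Set Implicit Arguments. Unset Strict Implicit. Unset Printing Implicit Defensive.
Import Order.TTheory GRing.Theory Num.Theory.
Local Open Scope ring_scope.

Definition subgroup (A : zmodType) (X : A -> Prop) : Prop :=
  X 0 /\ (forall x y, X x -> X y -> X (x - y)).

Definition additive_fun (A : zmodType) (f : A -> A) : Prop :=
  forall x y, f (x + y) = f x + f y.

(* phi inertial: for every subgroup X, (phi(X) + X)/X is finite, i.e.
   finitely many cosets c + X cover phi(X) (hence phi(X) + X). *)
Definition inertial (A : zmodType) (phi : A -> A) : Prop :=
  forall X : A -> Prop, subgroup X ->
    exists s : seq A, forall x, X x -> exists c, c \in s /\ X (phi x - c).

Definition torsion (A : zmodType) (a : A) : Prop :=
  exists k : nat, (0 < k)%N /\ a *+ k = 0.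

Definition periodic_mod (A : zmodType) (V : A -> Prop) : Prop :=
  forall a : A, exists k : nat, (0 < k)%N /\ V (a *+ k).

(* Finite torsion-free rank: some finite family s spans A up to torsion,
   i.e. A/<s> is periodic (equivalently dim_Q (A (x) Q) is finite). *)
Definition finite_tf_rank (A : zmodType) : Prop :=
  exists s : seq A, periodic_mod
     (fun a => exists c : nat -> int, a = \sum_(i < size s) s`_i *~ c i).

Definition induces_mult (A : zmodType) (phi : A -> A) (m n : int) : Prop :=
  forall x : A, torsion (phi x *~ n - x *~ m).

Definition Qpi (N : nat) (q : rat) : Prop :=
  forall p : nat, prime p -> (p %| `|denq q|)%N -> (p %| N)%N.

Definition iso_Qpi_pow (A : zmodType) (N r : nat) (V : A -> Prop) : Prop :=
  exists f : 'rV[rat]_r -> A,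
    [/\ (forall u v : 'rV[rat]_r, (forall j, Qpi N (u 0 j)) -> (forall j, Qpi N (v 0 j)) ->
            f (u + v) = f u + f v),
        (forall u v : 'rV[rat]_r, (forall j, Qpi N (u 0 j)) -> (forall j, Qpi N (v 0 j)) ->
            f u = f v -> u = v) &
        (forall a, V a <-> exists2 u : 'rV[rat]_r, (forall j, Qpi N (u 0 j)) & f u = a)].

(* Bezout identities u_i m_i + v_i n_i = 1 make u_i phi_i + v_i an inverse of n_i modulo
   the torsion subgroup T; composing them gives an additive th with N th(x) = x mod T,
   where N = n_1 ... n_t.  Prune a finite family spanning A modulo T until it becomes
   independent modulo T, say a_1, ..., a_r, and take multiples y_j = o a_j with
   N th(y_j) = y_j exactly.  The elements th^k(y_j) behave like y_j / N^k, so the subgroup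
   X they generate is isomorphic to (Q^pi)^r and A/X is periodic.  Writing N = n_i N_i,
   each phi_i acts on th^k(y_j) like m_i N_i th^(k+1)(y_j) modulo T, so it maps X into X
   modulo T; by inertiality only finitely many torsion defects occur, a single exponent e
   kills them all, and V := eX is the required submodule. *)

From HB Require Import structures.
From mathcomp Require Import all_boot all_order all_algebra.
From Stdlib Require Import Classical.
Import Order.TTheory GRing.Theory Num.Theory.
Set Implicit Arguments. Unset Strict Implicit. Unset Printing Implicit Defensive.
Local Open Scope ring_scope.

Section AdditiveFun.
Variables (A : zmodType) (f : A -> A).
Hypothesis hf : additive_fun f.

Lemma additive_fun_zmod_morphism : zmod_morphism f.
Proof.
have f0 : f 0 = 0 by apply: (addrI (f 0)); rewrite -hf !addr0.
by move=> x y; apply: (addIr (f y)); rewrite -hf subrK addrNK.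
Qed.

Let fA : {additive A -> A} :=
  HB.pack f (GRing.isZmodMorphism.Build A A f additive_fun_zmod_morphism).

Lemma additive_funMn x k : f (x *+ k) = f x *+ k. Proof. exact: (raddfMn fA). Qed.
Lemma additive_funMz x z : f (x *~ z) = f x *~ z. Proof. exact: (raddfMz fA). Qed.
Lemma additive_fun_sum I (s : seq I) (F : I -> A) :
  f (\sum_(i <- s) F i) = \sum_(i <- s) f (F i).
Proof. exact: (raddf_sum fA). Qed.

Lemma additive_fun_iter k : additive_fun (iter k f).
Proof. by elim: k => [|k IH] x y //=; rewrite IH hf. Qed.

End AdditiveFun.

Section Subgroup.
Variables (A : zmodType) (X : A -> Prop).
Hypothesis hX : subgroup X.

Lemma subgroup0 : X 0. Proof. exact: hX.1. Qed.
Lemma subgroupB x y : X x -> X y -> X (x - y). Proof. exact: hX.2. Qed.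
Lemma subgroupN x : X x -> X (- x).
Proof. by move=> Xx; rewrite -sub0r; apply: subgroupB => //; apply: subgroup0. Qed.
Lemma subgroupD x y : X x -> X y -> X (x + y).
Proof. by move=> Xx Xy; rewrite -[y]opprK; apply/subgroupB/subgroupN. Qed.

Definition mulrn_image (e : nat) (z : A) := exists2 x, X x & z = x *+ e.

Lemma periodic_mulrn_image e : (0 < e)%N -> periodic_mod X -> periodic_mod (mulrn_image e).
Proof.
move=> e_gt0 perX z; have [k [k_gt0 Xkz]] := perX z.
by exists (k * e)%N; split; [rewrite muln_gt0 k_gt0 | exists (z *+ k); rewrite ?mulrnA].
Qed.

Lemma subgroup_mulrn_image e : subgroup (mulrn_image e).
Proof.
split; first by exists 0; [apply: subgroup0 | rewrite mul0rn].
by move=> _ _ [x Xx ->] [x' Xx' ->]; exists (x - x'); [apply: subgroupB | rewrite mulrnBl].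
Qed.

End Subgroup.

Section Torsion.
Variable A : zmodType.
Implicit Types x y : A.

Lemma torsion0 : torsion (0 : A).
Proof. by exists 1%N; rewrite mulr1n. Qed.

Lemma torsionD x y : torsion x -> torsion y -> torsion (x + y).
Proof.
case=> k [k0 hk] [l [l0 hl]]; exists (k * l)%N; split; first by rewrite muln_gt0 k0.
by rewrite mulrnDl mulrnA hk mul0rn mulnC mulrnA hl mul0rn addr0.
Qed.

Lemma torsionMz x z : torsion x -> torsion (x *~ z).
Proof. by case=> k [k0 hk]; exists k; rewrite pmulrn mulrzAC -pmulrn hk mul0rz. Qed.

Lemma torsionMzK x z : z != 0 -> torsion (x *~ z) -> torsion x.
Proof.
move=> z0 [k [k0 hk]]; exists (`|z| * k)%N; split; first by rewrite muln_gt0 absz_gt0 z0.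
have -> : x *+ (`|z| * k) = x *~ z *+ k *~ sgz z.
  by rewrite mulrnA [x *+ `|z|]pmulrn abszEsg mulrC mulrzA !pmulrn mulrzAC.
by rewrite hk mul0rz.
Qed.

Lemma torsion_sum I (s : seq I) (F : I -> A) :
  (forall i, torsion (F i)) -> torsion (\sum_(i <- s) F i).
Proof.
by move=> tF; apply: (big_ind (@torsion A)) => //; [apply: torsion0 | apply: torsionD].
Qed.

End Torsion.

Lemma exists_common_multiple (I : eqType) (s : seq I) (Q : I -> nat -> Prop) :
  (forall i e d, Q i e -> Q i (e * d)%N) ->
  (forall i, i \in s -> exists2 e, (0 < e)%N & Q i e) ->
  exists2 e, (0 < e)%N & forall i, i \in s -> Q i e.
Proof.
move=> QM; elim: s => [|i s IH] hs; first by exists 1%N.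
have [e1 e1_gt0 Qe1] := hs i (mem_head _ _).
have [e2 e2_gt0 Qe2] := IH (fun j js => hs j (@mem_behead _ (i :: s) j js)).
exists (e1 * e2)%N => [|j]; first by rewrite muln_gt0 e1_gt0.
by rewrite in_cons => /predU1P[-> | js]; [apply: QM | rewrite mulnC; apply/QM/Qe2].
Qed.

Lemma torsion_common_order (A : zmodType) (r : nat) (x : 'I_r -> A) :
  (forall j, torsion (x j)) -> exists2 o, (0 < o)%N & forall j, x j *+ o = 0.
Proof.
move=> tx; have [o o_gt0 ho] : exists2 o, (0 < o)%N &
    forall j, j \in enum 'I_r -> x j *+ o = 0.
  apply: exists_common_multiple => [j e d h | j _]; first by rewrite mulrnA h mul0rn.
  by have [k [k_gt0 hk]] := tx j; exists k.
by exists o => // j; apply/ho/mem_enum.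
Qed.

Section Span.
Variable A : zmodType.

Definition span (r : nat) (a : nat -> A) (x : A) :=
  exists c : nat -> int, x = \sum_(i < r) a i *~ c i.

Definition torsion_independent (r : nat) (a : nat -> A) :=
  forall c : nat -> int,
    torsion (\sum_(i < r) a i *~ c i) -> forall i, (i < r)%N -> c i = 0.

Lemma periodic_span_drop r (a : nat -> A) (c : nat -> int) (j : 'I_r.+1) :
  periodic_mod (span r.+1 a) -> torsion (\sum_(i < r.+1) a i *~ c i) -> c j != 0 ->
  periodic_mod (span r (fun k => a (bump j k))).
Proof.
move=> span_a [o [o_gt0 ho]] cj0 x; have [p [p_gt0 [d hd]]] := span_a x.
pose w := c j * o%:Z.
have w0 : w != 0 by rewrite mulf_neq0 // -lt0n.
(* w a_j = - o \sum_(i != j) c_i a_i, so a_j can be eliminated from w^2 p x. *)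
have rel : a j *~ w = - \sum_(k < r) a (bump j k) *~ (c (bump j k) * o%:Z).
  move: ho; rewrite pmulrn mulrz_suml (bigD1_ord j) //= => /eqP; rewrite addr_eq0.
  by rewrite mulrzA => /eqP ->; congr (- _); apply: eq_bigr => k _; rewrite mulrzA.
exists (p * (`|w| * `|w|))%N; split; first by rewrite !muln_gt0 p_gt0 absz_gt0 w0.
exists (fun k => d (bump j k) * (w * w) - c (bump j k) * o%:Z * (d j * w)).
have ->: x *+ (p * (`|w| * `|w|)) = x *+ p *~ (w * w).
  by rewrite mulrnA !pmulrn -abszM gez0_abs // -expr2 sqr_ge0.
rewrite hd mulrz_suml (bigD1_ord j) //=.
have ->: a j *~ d j *~ (w * w) = a j *~ w *~ (d j * w) by rewrite -!mulrzA mulrCA.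
rewrite rel mulNrz mulrz_suml -sumrN -big_split /=.
by apply: eq_bigr => k _; rewrite -!mulrzA mulrzBr addrC.
Qed.

Lemma torsion_independent_span r (a : nat -> A) : periodic_mod (span r a) ->
  exists r' (a' : nat -> A), periodic_mod (span r' a') /\ torsion_independent r' a'.
Proof.
elim: r a => [|r IH] a span_a; first by exists 0%N, a; split => // c _ [].
have [indep | dep] := classic (torsion_independent r.+1 a); first by exists r.+1, a.
have [c [tc [i [ir ci0]]]] : exists c : nat -> int,
    torsion (\sum_(i < r.+1) a i *~ c i) /\ exists i, (i < r.+1)%N /\ c i != 0.
  apply: NNPP => nodep; apply: dep => c tc i ir; apply: NNPP => ci0.
  by apply: nodep; exists c; split => //; exists i; split => //; apply/eqP.
exact: IH _ (periodic_span_drop (j := Ordinal ir) span_a tc ci0).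
Qed.

Lemma finite_tf_rank_basis : finite_tf_rank A ->
  exists r (a : nat -> A), periodic_mod (span r a) /\ torsion_independent r a.
Proof. by case=> s; apply: torsion_independent_span. Qed.

End Span.

Definition inverse_mod_torsion (A : zmodType) (N : int) (th : A -> A) :=
  additive_fun th /\ forall x, torsion (th x *~ N - x).

Lemma inverse_mod_torsion1 (A : zmodType) : inverse_mod_torsion 1 (@id A).
Proof. by split=> // x; rewrite mulr1z subrr; apply: torsion0. Qed.

Lemma inverse_mod_torsionM (A : zmodType) N1 N2 (th1 th2 : A -> A) :
  inverse_mod_torsion N1 th1 -> inverse_mod_torsion N2 th2 ->
  inverse_mod_torsion (N1 * N2) (th1 \o th2).
Proof.
move=> [add1 inv1] [add2 inv2]; split=> [x y | x] /=; first by rewrite add2 add1.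
have ->: th1 (th2 x) *~ (N1 * N2) - x =
    (th1 (th2 x) *~ N1 - th2 x) *~ N2 + (th2 x *~ N2 - x).
  by rewrite mulrzBl addrA subrK mulrzA.
exact/torsionD/inv2/torsionMz/inv1.
Qed.

Lemma big_inverse_mod_torsion (A : zmodType) (I : finType) (n : I -> int) :
  (forall i, exists th : A -> A, inverse_mod_torsion (n i) th) ->
  exists th : A -> A, inverse_mod_torsion (\prod_i n i) th.
Proof.
move=> inv_n; elim/big_rec: _ => [|i N _ [th2 inv2]].
  by exists id; apply: inverse_mod_torsion1.
by have [th1 inv1] := inv_n i; exists (th1 \o th2); apply: inverse_mod_torsionM.
Qed.

Lemma inverse_mod_torsion_exact (A : zmodType) N (th : A -> A) r (a : nat -> A) :
  inverse_mod_torsion N th ->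
  exists2 o, (0 < o)%N & forall j : 'I_r, th (a j *+ o) *~ N = a j *+ o.
Proof.
move=> [add_th th_inv].
have [o o_gt0 ho] := torsion_common_order (fun j : 'I_r => th_inv (a j)).
exists o => // j; apply/eqP.
by rewrite -subr_eq0 additive_funMn // pmulrn mulrzAC -!pmulrn -mulrnBl ho.
Qed.

(* If u m + v n = 1 then n (u phi + v) - 1 = u (n phi - m). *)
Lemma induces_mult_inverse (A : zmodType) (phi : A -> A) m n :
  additive_fun phi -> coprimez m n -> induces_mult phi m n ->
  exists th : A -> A, inverse_mod_torsion n th.
Proof.
move=> add_phi /coprimezP[[u v] /= huv] mul_phi.
exists (fun x => phi x *~ u + x *~ v); split=> [x y | x].
  by rewrite add_phi !mulrzDl addrACA.
have ->: (phi x *~ u + x *~ v) *~ n - x = (phi x *~ n - x *~ m) *~ u.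
  have vn : v * n = 1 - u * m by rewrite -huv addrAC subrr add0r.
  rewrite mulrzDl mulrzBl -!mulrzA vn mulrzBr mulr1z (mulrC n u) (mulrC m u).
  by rewrite -addrA addrAC subrr add0r.
exact/torsionMz/mul_phi.
Qed.

Lemma induces_mult_frac (A : zmodType) (phi th : A -> A) (m n M : int) z :
  n != 0 -> induces_mult phi m n -> th z *~ (n * M) = z ->
  torsion (phi z - th z *~ (m * M)).
Proof.
move=> n0 mul_phi thz; apply: (torsionMzK n0).
by rewrite mulrzBl -mulrzA -mulrA (mulrC M) (mulrC m) mulrzA thz; apply: mul_phi.
Qed.

Lemma dvdn_exp_pi (d M : nat) : (0 < d)%N ->
  (forall p, prime p -> (p %| d)%N -> (p %| M)%N) -> (d %| M ^ d)%N.
Proof.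
move=> d_gt0 pi_d; apply/dvdn_partP => // p; rewrite mem_primes => /and3P[p_pr _ p_d].
rewrite p_part (dvdn_trans (dvdn_exp2l p (ltnW (ltn_logl p d_gt0)))) //.
by rewrite dvdn_exp2r // pi_d.
Qed.

Lemma Qpi_scale_int (M : int) (q : rat) k : Qpi `|M| q -> (`|denq q| <= k)%N ->
  q * M%:~R ^+ k \is a Num.int.
Proof.
move=> Qq den_k; have den_gt0 : (0 < `|denq q|)%N by rewrite absz_gt0 denq_neq0.
have /dvdzP[w Mk] : (denq q %| M ^+ k)%Z.
  by rewrite dvdzE abszX (dvdn_trans (dvdn_exp_pi den_gt0 Qq)) // dvdn_exp2l.
rewrite -rmorphXn /= Mk intrM mulrA mulrAC -numqE -intrM.
exact: intr_int.
Qed.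

Lemma Qpi_of_scale_int (M : int) (q : rat) k : q * M%:~R ^+ k \is a Num.int -> Qpi `|M| q.
Proof.
move=> /numqK qMk p p_pr p_den.
have: (`|denq q| %| `|numq q| * `|M| ^ k)%N.
  rewrite -abszX -abszM; apply/dvdzP; exists (numq (q * M%:~R ^+ k)).
  apply: (@intr_inj rat); rewrite !intrM rmorphXn /= qMk numqE.
  by rewrite mulrAC.
rewrite Gauss_dvdr; last by rewrite coprime_sym coprime_num_den.
by move=> /(dvdn_trans p_den); rewrite Euclid_dvdX // => /andP[].
Qed.

Lemma iso_Qpi_pow_mulrn_image (A : zmodType) (M r e : nat) (X : A -> Prop) :
  subgroup X -> (forall x, X x -> torsion x -> x = 0) -> (0 < e)%N ->
  iso_Qpi_pow M r X -> iso_Qpi_pow M r (mulrn_image X e).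
Proof.
move=> sgX tfX e_gt0 [f [fD f_inj fX]]; exists (fun u => f u *+ e); split.
- by move=> u v Qu Qv; rewrite fD ?mulrnDl.
- move=> u v Qu Qv /eqP; rewrite -subr_eq0 -mulrnBl => /eqP fuv.
  apply: f_inj => //; apply/eqP; rewrite -subr_eq0; apply/eqP/tfX; last by exists e.
  by apply: subgroupB => //; apply/fX; [exists u | exists v].
- move=> z; split=> [[_ /fX[u Qu <-] ->] | [u Qu <-]]; first by exists u.
  by exists (f u) => //; apply/fX; exists u.
Qed.

Lemma inertial_exponent (A : zmodType) (phi : A -> A) (X : A -> Prop) :
  inertial phi -> subgroup X ->
  (forall x, X x -> exists2 x', X x' & torsion (phi x - x')) ->
  exists2 e, (0 < e)%N & forall x, X x -> exists2 x', X x' & phi x *+ e = x' *+ e.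
Proof.
move=> inert_phi sgX phiX; have [s cover] := inert_phi X sgX.
(* Only the finitely many representatives in [s] matter, so one exponent kills all
   torsion defects. *)
have [e e_gt0 he] : exists2 e, (0 < e)%N & forall c, c \in s ->
    (exists2 x, X x & torsion (c - x)) -> exists2 x, X x & (c - x) *+ e = 0.
  apply: exists_common_multiple => [c e d hc /hc[x Xx hx] | c _].
    by exists x => //; rewrite mulrnA hx mul0rn.
  have [[x Xx [k [k_gt0 hk]]] | no_x] := classic (exists2 x, X x & torsion (c - x)).
    by exists k => // _; exists x.
  by exists 1%N => // /no_x.
exists e => // x Xx; have [c [cs Xc]] := cover x Xx; have [x' Xx' tx'] := phiX x Xx.
have [|z Xz hz] := he c cs.
  exists (x' - (phi x - c)); first exact: subgroupB.
  by rewrite opprB addrCA addrA subrK.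
exists (phi x - c + z); first exact: subgroupD.
by rewrite -[in LHS](subrK (c - z) (phi x)) mulrnDl hz addr0 opprB addrA addrAC.
Qed.

Section DivisibleHull.
Variables (A : zmodType) (th : A -> A) (N : int) (r : nat) (y : 'I_r -> A).
Hypothesis add_th : additive_fun th.
Hypothesis thyN : forall j, th (y j) *~ N = y j.

(* [iter k th (y j)] plays the role of [y j / N ^ k]. *)
Definition hull_comb k (c : 'I_r -> int) := \sum_(j < r) iter k th (y j) *~ c j.

Definition divisible_hull x := exists k c, x = hull_comb k c.

Lemma iter_thyN k l j : iter (l + k) th (y j) *~ N ^+ l = iter k th (y j).
Proof.
elim: l => [|l IH]; first by rewrite mulr1z.
by rewrite exprS mulrzA addSn iterSr -additive_funMz ?thyN //; apply: additive_fun_iter.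
Qed.

Lemma hull_comb_lift k l c : hull_comb k c = hull_comb (l + k) (fun j => c j * N ^+ l).
Proof. by apply: eq_bigr => j _; rewrite mulrC mulrzA iter_thyN. Qed.

Lemma hull_combD k c c' :
  hull_comb k c + hull_comb k c' = hull_comb k (fun j => c j + c' j).
Proof. by rewrite -big_split; apply: eq_bigr => j _; rewrite mulrzDr. Qed.

Lemma hull_combB k c c' :
  hull_comb k c - hull_comb k c' = hull_comb k (fun j => c j - c' j).
Proof. by rewrite -sumrB; apply: eq_bigr => j _; rewrite mulrzBr. Qed.

Lemma hull_comb_scale k c : hull_comb k c *~ N ^+ k = hull_comb 0 c.
Proof.
rewrite mulrz_suml; apply: eq_bigr => j _.
by rewrite mulrzAC -{1}[k]addn0 iter_thyN.
Qed.

Lemma divisible_hull_comb k c : divisible_hull (hull_comb k c).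
Proof. by exists k, c. Qed.

Lemma subgroup_divisible_hull : subgroup divisible_hull.
Proof.
split; first by exists 0%N, (fun _ => 0); rewrite /hull_comb big1 // => j _; rewrite mulr0z.
move=> _ _ [k [c ->]] [l [c' ->]].
rewrite (hull_comb_lift k l) (hull_comb_lift l k) addnC hull_combB.
exact: divisible_hull_comb.
Qed.

Lemma hull_image_mod_torsion (phi : A -> A) (m n M : int) :
  additive_fun phi -> n != 0 -> induces_mult phi m n -> N = n * M ->
  forall x, divisible_hull x -> exists2 x', divisible_hull x' & torsion (phi x - x').
Proof.
move=> add_phi n0 mul_phi NnM _ [k [c ->]].
exists (hull_comb k.+1 (fun j => c j * (m * M))); first exact: divisible_hull_comb.
rewrite additive_fun_sum // -sumrB; apply: torsion_sum => j.
rewrite additive_funMz // -mulrzA_C -mulrzBl; apply: torsionMz.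
apply: (induces_mult_frac n0 mul_phi).
by rewrite -NnM -iterS -[N]expr1 (iter_thyN k 1).
Qed.

Lemma divisible_hull_exponent (I : finType) (phi : I -> A -> A) (m n M : I -> int) :
  (forall i, additive_fun (phi i)) -> (forall i, inertial (phi i)) ->
  (forall i, n i != 0) ->
  (forall i, induces_mult (phi i) (m i) (n i)) -> (forall i, N = n i * M i) ->
  exists2 e, (0 < e)%N & forall i x, divisible_hull x ->
    exists2 x', divisible_hull x' & phi i x *+ e = x' *+ e.
Proof.
move=> add_phi inert_phi n0 mul_phi NnM.
have [e e_gt0 he] : exists2 e, (0 < e)%N & forall i, i \in enum I ->
    forall x, divisible_hull x -> exists2 x', divisible_hull x' & phi i x *+ e = x' *+ e.
  apply: exists_common_multiple => [i e d he x /he[x' Xx' hx'] | i _].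
    by exists x' => //; rewrite !mulrnA hx'.
  apply: inertial_exponent => //; first exact: subgroup_divisible_hull.
  exact: hull_image_mod_torsion (add_phi i) (n0 i) (mul_phi i) (NnM i).
by exists e => // i; apply/he/mem_enum.
Qed.

Implicit Types u v : 'rV[rat]_r.

Definition int_at u k := forall j, u 0 j * N%:~R ^+ k \is a Num.int.

Definition row_coord u k j : int := numq (u 0 j * N%:~R ^+ k).

Definition denom_bound u := (\sum_j `|denq (u 0%R j)|)%N.

(* [u] is sent to "\sum_j u_j y_j", computed at any level [k] where all [u_j N ^ k] are
   integers; [hull_of_rowE] shows that the level does not matter. *)
Definition hull_of_row u :=
  hull_comb (denom_bound u) (row_coord u (denom_bound u)).

Lemma int_at_Qpi u k :
  (forall j, Qpi `|N| (u 0 j)) -> (denom_bound u <= k)%N -> int_at u k.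
Proof.
move=> Qu Kk j; apply: Qpi_scale_int => //; apply: leq_trans Kk.
by rewrite /denom_bound (bigD1 j) //= leq_addr.
Qed.

Lemma row_coordE u k j : int_at u k -> (row_coord u k j)%:~R = u 0 j * N%:~R ^+ k.
Proof. by move=> /(_ j); apply: numqK. Qed.

Lemma hull_comb_row_coord_lift u k l : int_at u k ->
  hull_comb k (row_coord u k) = hull_comb (l + k) (row_coord u (l + k)).
Proof.
move=> uk; rewrite (hull_comb_lift k l); apply: eq_bigr => j _; congr (_ *~ _).
apply: (@intr_inj rat); rewrite intrM rmorphXn /= row_coordE // row_coordE.
  by rewrite -mulrA -exprD addnC.
by move=> j'; rewrite addnC exprD mulrA rpredM ?rpredX ?intr_int.
Qed.

Lemma hull_of_rowE u k : (forall j, Qpi `|N| (u 0 j)) -> int_at u k ->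
  hull_of_row u = hull_comb k (row_coord u k).
Proof.
move=> Qu uk; have uK := int_at_Qpi Qu (leqnn (denom_bound u)).
rewrite /hull_of_row; have [Kk | kK] := leqP (denom_bound u) k.
  by rewrite -(subnK Kk) -hull_comb_row_coord_lift.
by rewrite -(subnK (ltnW kK)) -hull_comb_row_coord_lift.
Qed.

Section Independent.
Variables (a : nat -> A) (o : nat).
Hypothesis y_def : forall j, y j = a j *+ o.
Hypothesis o_gt0 : (0 < o)%N.
Hypothesis indep_a : torsion_independent r a.

Lemma hull_comb_torsion_eq0 k c : torsion (hull_comb k c) -> forall j, c j = 0.
Proof.
move=> /(torsionMz (N ^+ k)); rewrite hull_comb_scale => tc j.
pose C i := oapp (fun j => c j * o%:Z) 0 (insub i).
have: torsion (\sum_(i < r) a i *~ C i).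
  congr torsion: tc; apply: eq_bigr => i _.
  by rewrite /C valK /= y_def pmulrn mulrzA_C.
move=> /indep_a /(_ j (ltn_ord j)); rewrite /C valK /= => /eqP.
by rewrite mulf_eq0 eqz_nat (gtn_eqF o_gt0) orbF => /eqP.
Qed.

Lemma divisible_hull_torsion_free x : divisible_hull x -> torsion x -> x = 0.
Proof.
move=> [k [c ->]] /hull_comb_torsion_eq0 c0.
by rewrite /hull_comb big1 // => j _; rewrite c0 mulr0z.
Qed.

Lemma periodic_divisible_hull : periodic_mod (span r a) -> periodic_mod divisible_hull.
Proof.
move=> span_a z; have [p [p_gt0 [c hc]]] := span_a z.
exists (p * o)%N; split; first by rewrite muln_gt0 p_gt0 o_gt0.
exists 0%N, (fun j => c j); rewrite mulrnA hc -sumrMnl; apply: eq_bigr => j _.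
by rewrite /= y_def pmulrn mulrzAC -pmulrn.
Qed.

Hypothesis N0 : N != 0.

Lemma iso_divisible_hull : iso_Qpi_pow `|N| r divisible_hull.
Proof.
have N0k k : (N%:~R : rat) ^+ k != 0 by rewrite expf_neq0 // intr_eq0.
exists hull_of_row; split.
- move=> u v Qu Qv; set k := (denom_bound u + denom_bound v)%N.
  have uk : int_at u k by apply: int_at_Qpi; rewrite ?leq_addr.
  have vk : int_at v k by apply: int_at_Qpi; rewrite ?leq_addl.
  have uvk : int_at (u + v) k by move=> j; rewrite mxE mulrDl rpredD.
  have Quv j : Qpi `|N| ((u + v) 0 j) := Qpi_of_scale_int (uvk j).
  rewrite (hull_of_rowE Quv uvk) (hull_of_rowE Qu uk) (hull_of_rowE Qv vk) hull_combD.
  apply: eq_bigr => j _; congr (_ *~ _); apply: (@intr_inj rat).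
  by rewrite intrD !row_coordE // mxE mulrDl.
- move=> u v Qu Qv; set k := (denom_bound u + denom_bound v)%N.
  have uk : int_at u k by apply: int_at_Qpi; rewrite ?leq_addr.
  have vk : int_at v k by apply: int_at_Qpi; rewrite ?leq_addl.
  rewrite (hull_of_rowE Qu uk) (hull_of_rowE Qv vk) => /eqP; rewrite -subr_eq0 hull_combB.
  move=> /eqP huv.
  have tc : torsion (hull_comb k (fun j => row_coord u k j - row_coord v k j)).
    by rewrite huv; apply: torsion0.
  apply/rowP => j; apply: (mulIf (N0k k)); rewrite -!row_coordE //.
  by apply/eqP; rewrite eqr_int -subr_eq0 (hull_comb_torsion_eq0 tc j).
- move=> x; split=> [[k [c ->]] | [u Qu <-]]; last exact: divisible_hull_comb.
  pose u : 'rV[rat]_r := \row_j ((c j)%:~R / N%:~R ^+ k).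
  have uk : int_at u k by move=> j; rewrite mxE mulfVK // intr_int.
  have Qu j : Qpi `|N| (u 0 j) := Qpi_of_scale_int (uk j).
  exists u => //; rewrite (hull_of_rowE Qu uk); apply: eq_bigr => j _; congr (_ *~ _).
  by apply: (@intr_inj rat); rewrite row_coordE // mxE mulfVK.
Qed.

End Independent.

End DivisibleHull.

Theorem lemma5p1 (A : zmodType) (t : nat) (phi : 'I_t -> A -> A)
  (m n : 'I_t -> int)
  (hadd : forall i, additive_fun (phi i))
  (hin : forall i, inertial (phi i))
  (hrank : finite_tf_rank A)
  (hn0 : forall i, n i != 0)
  (hcop : forall i, coprimez (m i) (n i))
  (hmul : forall i, induces_mult (phi i) (m i) (n i)) :
  exists (V : A -> Prop) (r : nat),
    [/\ subgroup V,
        (forall i a, V a -> V (phi i a)),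
        iso_Qpi_pow `|(\prod_(i < t) n i)%R|%N r V &
        periodic_mod V].
Proof.
have [th inv_th] : exists th : A -> A, inverse_mod_torsion (\prod_(i < t) n i) th.
  by apply: big_inverse_mod_torsion => i; apply: induces_mult_inverse.
set N := \prod_(i < t) n i in inv_th *; have add_th := inv_th.1.
have N0 : N != 0 by apply/prodf_neq0 => i _.
have [r [a [span_a indep_a]]] := finite_tf_rank_basis hrank.
have [o o_gt0 thaN] := inverse_mod_torsion_exact r a inv_th.
pose y (j : 'I_r) := a j *+ o.
have thyN : forall j, th (y j) *~ N = y j := thaN.
have NnM i : N = n i * \prod_(j < t | j != i) n j by rewrite /N (bigD1 i).
have [e e_gt0 phiX] := divisible_hull_exponent add_th thyN hadd hin hn0 hmul NnM.
have sgX := subgroup_divisible_hull add_th thyN.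
exists (mulrn_image (divisible_hull th y) e), r; split.
- exact: subgroup_mulrn_image.
- by move=> i _ [x /(phiX i)[x' Xx' hx'] ->]; exists x'; rewrite // additive_funMn.
- apply: iso_Qpi_pow_mulrn_image => //; first exact: divisible_hull_torsion_free indep_a.
  exact: iso_divisible_hull indep_a N0.
- exact/periodic_mulrn_image/periodic_divisible_hull/span_a.
Qed.
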